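(* Let $X$ be a $\sigma$-compact metrizable Suslin space with no isolated points, and let $T\subseteq X\times Y$. (1) If $Y$ is a compact Fréchet space, then there exists a Baire-2 function $f:X\to Y$ with $L_f=T$ if and only if $T$ is closed and $T\cap(\{x\}\times Y)\neq\emptyset$ for each $x\in X$. (2) If $Y$ is a $\sigma$-compact but not compact Fréchet space, then there exists a Baire-2 function $f:X\to Y$ with $L_f=T$ if and only if $T$ is closed and there is a countable set $D\subseteq X$ such that $T\cap(\{x\}\times Y)\neq\emptyset$ for each $x\in X\setminus D$.
   Context: For $f:X\to Y$, $L_f$ denotes the set of accumulation points in $X\times Y$ of the graph $gr(f)=\{(x,f(x)):x\in X\}$. A Suslin space is a Hausdorff continuous image of a Polish space. A Fréchet space is a locally convex topological vector space complete with respect to a translation invariant metric. A space is $\sigma$-compact if it is a countable union of compact sets. Baire-0 functions are continuous functions; Baire-1 functions are pointwise limits of sequences of continuous functions; Baire-2 functions are pointwise limits of sequences of Baire-1 (or continuous) functions. *)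

From HB Require Import structures.
From mathcomp Require Import all_boot all_order all_algebra.
From mathcomp Require Import all_classical all_reals all_analysis.
Set Implicit Arguments. Unset Strict Implicit. Unset Printing Implicit Defensive.
Import Order.TTheory GRing.Theory Num.Theory.
Local Open Scope classical_set_scope.
Local Open Scope ring_scope.

Definition is_metric (R : realType) (T : Type) (d : T -> T -> R) : Prop :=
  [/\ forall x y, 0 <= d x y,
      forall x y, d x y = 0 <-> x = y,
      forall x y, d x y = d y x &
      forall x y z, d x z <= d x y + d y z].

Definition induces_topology (R : realType) (T : topologicalType)
  (d : T -> T -> R) : Prop :=
  forall A : set T, open A <->
    (forall x, A x -> exists2 e : R, 0 < e & [set y | d x y < e] `<=` A).

Definition metric_complete (R : realType) (T : topologicalType)
  (d : T -> T -> R) : Prop :=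
  forall u : nat -> T,
    (forall e : R, 0 < e -> exists N, forall m n, (N <= m)%N -> (N <= n)%N ->
        d (u m) (u n) < e) ->
    exists l : T, u n @[n --> \oo] --> l.

Definition metrizable (R : realType) (T : topologicalType) : Prop :=
  exists d : T -> T -> R, is_metric d /\ induces_topology d.

Definition polish (R : realType) (P : topologicalType) : Prop :=
  (exists D : set P, countable D /\ dense D) /\
  exists d : P -> P -> R, [/\ is_metric d, induces_topology d & metric_complete d].

Definition suslin (R : realType) (X : topologicalType) : Prop :=
  hausdorff_space X /\
  exists (P : topologicalType) (g : P -> X),
    [/\ polish R P, continuous g & g @` setT = setT].

Definition sigma_compact (T : topologicalType) : Prop :=
  exists K : nat -> set T, (forall n, compact (K n)) /\ \bigcup_n K n = setT.

Definition no_isolated_points (T : topologicalType) : Prop :=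
  forall x : T, ~ open [set x].

Definition frechet (R : realType) (Y : tvsType R) : Prop :=
  exists d : Y -> Y -> R,
    [/\ is_metric d, induces_topology d, metric_complete d &
        forall x y z : Y, d (x + z) (y + z) = d x y].

Definition baire0 (X Y : topologicalType) (f : X -> Y) : Prop := continuous f.

Definition baire1 (X Y : topologicalType) (f : X -> Y) : Prop :=
  exists g : nat -> X -> Y,
    (forall n, baire0 (g n)) /\ forall x, g n x @[n --> \oo] --> f x.

Definition baire2 (X Y : topologicalType) (f : X -> Y) : Prop :=
  exists g : nat -> X -> Y,
    (forall n, baire1 (g n)) /\ forall x, g n x @[n --> \oo] --> f x.

Definition graph (X Y : Type) (f : X -> Y) : set (X * Y) :=
  [set p | p.2 = f p.1].

Definition Lf (X Y : topologicalType) (f : X -> Y) : set (X * Y) :=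
  limit_point (graph f).

From HB Require Import structures.
From mathcomp Require Import all_boot all_order all_algebra.
From mathcomp Require Import all_classical all_reals all_analysis.
From mathcomp.algebra_tactics Require Import ring lra.
Import Order.TTheory GRing.Theory Num.Theory.
Import numFieldNormedType.Exports.
Local Open Scope classical_set_scope.
Local Open Scope ring_scope.

(* Necessity holds for every f. Limit points form a closed set. If Y is compact, the values
   of f at points x' -> x, x' <> x, cluster somewhere in Y. If Y is the union of compact sets
   K_n, a point x with empty section of L_f and f x in K_n has a punctured ball on which f
   avoids K_n; such points are isolated among themselves and hence, X being separable,
   countably many.
   Conversely, f is the pointwise limit of Baire-1 stages glued along closed sets. At pairwise
   distinct anchors a_i (X has no isolated points) f takes values y_i, where (a_i, y_i) lies
   within 1/(i+1) of a dense sequence of T: every point of T becomes a limit point of the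
   graph, and limit points of the anchors lie in T. Points of the countable set D go to
   multiples j v of a fixed v <> 0 with distinct j, which accumulate nowhere. Elsewhere f is
   the limit of a Baire-1 selection of x |-> T_x, built from finer and finer finite nets of
   the compact pieces of Y. *)

Section InducedMetric.
Context {R : realType} {T : topologicalType} {d : T -> T -> R}.
Hypotheses (hm : is_metric d) (ht : induces_topology d).

Lemma is_metric_ge0 x y : 0 <= d x y. Proof. by case: hm. Qed.
Lemma is_metric_sym x y : d x y = d y x. Proof. by case: hm. Qed.
Lemma is_metric_triangle x y z : d x z <= d x y + d y z. Proof. by case: hm. Qed.
Lemma is_metric_xx x : d x x = 0. Proof. by case: hm => _ h _ _; apply/h. Qed.

Lemma is_metric_gt0 x y : x != y -> 0 < d x y.
Proof.
case: hm => _ h _ _ xy; rewrite lt_neqAle is_metric_ge0 andbT.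
by apply: contra xy => /eqP/esym/h ->.
Qed.

Lemma open_dball x e : open [set y | d x y < e].
Proof.
apply/ht => z /= hz; exists (e - d x z); first by rewrite subr_gt0.
move=> w /= hw; have := is_metric_triangle x z w; lra.
Qed.

Lemma nbhs_dballP x A : nbhs x A <-> exists2 e, 0 < e & [set y | d x y < e] `<=` A.
Proof.
split.
  rewrite nbhsE => -[B [oB Bx] BA].
  have [e e0 He] := (ht B).1 oB x Bx.
  by exists e => // y /He /BA.
move=> [e e0 He]; apply: (filterS He); apply: open_nbhs_nbhs; split.
  exact: open_dball.
by rewrite /= is_metric_xx.
Qed.

Lemma nbhs_dball x (e : R) : 0 < e -> nbhs x [set y | d x y < e].
Proof. by move=> e0; apply/nbhs_dballP; exists e. Qed.

Lemma closed_dcball z r : closed [set y | d z y <= r].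
Proof.
rewrite -[X in closed X]setCK; apply: open_closedC.
apply/ht => w /= /negP; rewrite -ltNge => hw; exists (d z w - r); first by rewrite subr_gt0.
move=> u /= hu; apply/negP; rewrite -ltNge.
have := is_metric_triangle z u w; rewrite (is_metric_sym u w); lra.
Qed.

Lemma closed_dist_approx {A x} : closed A ->
  (forall e, 0 < e -> exists2 a, A a & d x a < e) -> A x.
Proof.
move=> cA H; apply: cA => B /nbhs_dballP [e e0 He].
by have [a Aa ha] := H e e0; exists a; split => //; apply: He.
Qed.

Lemma induced_hausdorff : hausdorff_space T.
Proof.
move=> p q hpq; apply: contrapT => /eqP /is_metric_gt0 dpos.
have h2 : 0 < d p q / 2 by lra.
have [z [/= z1 z2]] := hpq _ _ (nbhs_dball p _ h2) (nbhs_dball q _ h2).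
have := is_metric_triangle p z q; rewrite (is_metric_sym z q); lra.
Qed.

Lemma cvg_distP (u : nat -> T) l :
  u n @[n --> \oo] --> l <-> forall e, 0 < e -> \forall n \near \oo, d l (u n) < e.
Proof.
split; first by move=> H e e0; exact: (H _ (nbhs_dball l _ e0)).
move=> H A /nbhs_dballP [e e0 He]; apply: filterS (H e e0) => n; exact: He.
Qed.

Lemma dense_dball (Q : set T) : dense Q ->
  forall x e, 0 < e -> exists2 q, Q q & d x q < e.
Proof.
move=> dQ x e e0.
have [|q [hq Qq]] := dQ [set y | d x y < e] _ (open_dball x e); last by exists q.
by exists x; rewrite /= is_metric_xx.
Qed.

End InducedMetric.

Section LimitPoints.
Context {T : topologicalType}.

Lemma limit_point_subset {A B : set T} : A `<=` B -> limit_point A `<=` limit_point B.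
Proof. by move=> AB p h U hU; have [y [yp Ay Uy]] := h U hU; exists y; split => //; apply: AB. Qed.

Lemma limit_pointU (A B : set T) p :
  limit_point (A `|` B) p -> limit_point A p \/ limit_point B p.
Proof.
move=> h; apply: contrapT => /not_orP [].
rewrite !not_limit_pointE => -[U hU nU] [V hV nV].
have [y [/eqP yp [Ay|By] [Uy Vy]]] := h _ (filterI hU hV).
- by apply: yp; apply: (nU y); split.
- by apply: yp; apply: (nV y); split.
Qed.

Hypothesis sepT : accessible_space T.

Lemma limit_point_setD_seq {E : set T} (s : seq T) :
  limit_point E `<=` limit_point [set z | E z /\ z \notin s].
Proof.
elim: s E => [|a s IH] E p h; first by apply: limit_point_subset h => z Ez; split.
have h' : limit_point [set z | E z /\ z != a] p.
  have [->|ap] := eqVneq a p.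
    by move=> U hU; have [y [yp Ey Uy]] := h U hU; exists y.
  have [V [oV Vp Va]] : exists V, [/\ open V, p \in V & a \in ~` V].
    by apply: sepT; rewrite eq_sym.
  have hV : nbhs p V by apply: open_nbhs_nbhs; split => //; exact: set_mem.
  move=> U hU; have [y [yp Ey [Uy Vy]]] := h _ (filterI hU hV).
  exists y; split => //; split => //; apply/eqP => ya.
  by move: Va; rewrite inE /= -ya.
apply: limit_point_subset (IH _ _ h') => z [[Ez za] zs].
by split => //; rewrite inE negb_or za.
Qed.

Lemma closed_limit_point (E : set T) : closed (limit_point E).
Proof.
move=> p clp U; rewrite nbhsE => -[V [oV Vp] VU].
have [q [lq Vq]] := clp V (open_nbhs_nbhs (conj oV Vp)).
have [<-|qp] := eqVneq q p.
  have [z [zp Ez Vz]] := lq V (open_nbhs_nbhs (conj oV Vq)).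
  by exists z; split => //; apply: VU.
have [W [oW Wq Wp]] := sepT _ _ qp.
have hW : nbhs q W by apply: open_nbhs_nbhs; split => //; exact: set_mem.
have [z [zq Ez [Vz Wz]]] := lq _ (filterI (open_nbhs_nbhs (conj oV Vq)) hW).
exists z; split => //; last exact: VU.
by apply/eqP => zp; move: Wp; rewrite inE /= -zp.
Qed.

End LimitPoints.

Lemma prod_nbhsP {X Y : topologicalType} (p : X * Y) (U : set (X * Y)) :
  nbhs p U <-> exists A B, [/\ nbhs p.1 A, nbhs p.2 B & forall a b, A a -> B b -> U (a, b)].
Proof.
split.
  move=> [[A B] /= [hA hB] hAB]; exists A, B; split => // a b Aa Bb.
  by apply: hAB; split.
move=> [A [B [hA hB hAB]]]; exists (A, B) => //= [[a b]] [/= Aa Bb]; exact: hAB.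
Qed.

Lemma accessible_prod {X Y : topologicalType} :
  accessible_space X -> accessible_space Y -> accessible_space (X * Y)%type.
Proof.
move=> sX sY [x y] [x' y'] /= pq.
have [xx'|] := eqVneq x x'; last first.
  move=> /sX [A [oA Ax Ax']]; exists (A `*` setT); split => //.
  - rewrite openE => -[a b] [/= Aa _]; apply/prod_nbhsP; exists A, setT.
    by split => //; [exact: open_nbhs_nbhs | exact: filterT].
  - by rewrite inE; split => //; exact: set_mem.
  - by move: Ax'; rewrite !inE => Ax' [].
have /sY [B [oB By By']] : y != y' by apply: contra_neq pq => <-; rewrite xx'.
exists (setT `*` B); split => //.
- rewrite openE => -[a b] [_ /= Bb]; apply/prod_nbhsP; exists setT, B.
  by split => //; [exact: filterT | exact: open_nbhs_nbhs].
- by rewrite inE; split => //; exact: set_mem.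
- by move: By'; rewrite !inE => By' [].
Qed.

Section Baire1Glue.
Context {R : realType} {X : topologicalType} {Y : tvsType R} {dX : X -> X -> R}.
Hypotheses (hm : is_metric dX) (ht : induces_topology dX).

Lemma continuousZ_tvs (h : X -> R) (u : X -> Y) :
  continuous h -> continuous u -> continuous (fun x => h x *: u x).
Proof.
move=> ch cu x.
have hp : (fun y => ((h y : R^o), u y)) @ x --> ((h x : R^o), u x).
  exact: cvg_pair (ch x) (cu x).
exact: cvg_comp hp (@scale_continuous R Y (h x, u x)).
Qed.

Lemma continuousD_tvs (u w : X -> Y) :
  continuous u -> continuous w -> continuous (fun x => u x + w x).
Proof.
move=> cu cw x.
exact: cvg_comp (cvg_pair (cu x) (cw x)) (@add_continuous Y (u x, w x)).
Qed.

Lemma lipschitz_continuous_dist (h : X -> R) (k : R) : 0 < k ->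
  (forall x x', `|h x - h x'| <= k * dX x x') -> continuous h.
Proof.
move=> k0 Hl x; apply/cvgrPdist_lt => e e0.
apply/(nbhs_dballP hm ht); exists (e / k); first by rewrite divr_gt0.
move=> t /= ht'; apply: le_lt_trans (Hl x t) _.
by rewrite -ltr_pdivlMl // mulrC.
Qed.

Definition setdist (F : set X) x := inf [set dX x z | z in F].

Lemma setdist_le F x z : F z -> setdist F x <= dX x z.
Proof.
move=> Fz; apply: ge_inf; last by exists z.
by exists 0 => _ [w _ <-]; exact: is_metric_ge0.
Qed.

Lemma setdist_ge0 F x : F !=set0 -> 0 <= setdist F x.
Proof.
move=> [z Fz]; apply: lb_le_inf; first by exists (dX x z), z.
by move=> _ [w _ <-]; exact: is_metric_ge0.
Qed.

Lemma setdist_triangle F x x' : F !=set0 -> setdist F x <= dX x x' + setdist F x'.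
Proof.
move=> [z0 Fz0]; rewrite -lerBlDl; apply: lb_le_inf; first by exists (dX x' z0), z0.
move=> _ [z Fz <-]; rewrite lerBlDl.
exact: le_trans (setdist_le _ _ _ Fz) (is_metric_triangle hm _ _ _).
Qed.

Lemma setdist_eq0 F x : F x -> setdist F x = 0.
Proof.
move=> Fx; apply/eqP; rewrite eq_le setdist_ge0 ?andbT; last by exists x.
by have := setdist_le _ x _ Fx; rewrite is_metric_xx.
Qed.

Lemma setdist_gt0 F x : closed F -> F !=set0 -> ~ F x -> 0 < setdist F x.
Proof.
move=> cF [z0 Fz0] nFx.
have : nbhs x (~` F) by apply: open_nbhs_nbhs; split => //; rewrite openC.
move=> /(nbhs_dballP hm ht) [e e0 He]; apply: lt_le_trans e0 _.
apply: lb_le_inf; first by exists (dX x z0), z0.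
move=> _ [z Fz <-]; rewrite leNgt; apply/negP => hz.
exact: He hz Fz.
Qed.

Definition cutoff (F : set X) (m : nat) x : R :=
  if m%:R * setdist F x < 1 then 1 - m%:R * setdist F x else 0.

Lemma cutoff_lipschitz F m x x' : F !=set0 ->
  `|cutoff F m x - cutoff F m x'| <= m.+1%:R * dX x x'.
Proof.
move=> F0.
have d0 : 0 <= dX x x' := is_metric_ge0 hm x x'.
have H1 : m%:R * setdist F x <= m%:R * dX x x' + m%:R * setdist F x'.
  by rewrite -mulrDr; apply: ler_wpM2l => //; exact: setdist_triangle.
have H2 : m%:R * setdist F x' <= m%:R * dX x x' + m%:R * setdist F x.
  rewrite -mulrDr; apply: ler_wpM2l => //; rewrite (is_metric_sym hm).
  exact: setdist_triangle.
have H3 : m%:R * dX x x' <= m.+1%:R * dX x x'.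
  by apply: ler_wpM2r => //; rewrite ler_nat.
rewrite /cutoff; case: ifP => h1; case: ifP => h2; rewrite ler_norml; lra.
Qed.

Lemma continuous_cutoff F m : F !=set0 -> continuous (cutoff F m).
Proof.
move=> F0; apply: (@lipschitz_continuous_dist _ m.+1%:R) => // x x'.
exact: cutoff_lipschitz.
Qed.

Lemma continuous_cutoffC F m : F !=set0 -> continuous (fun x => 1 - cutoff F m x).
Proof.
move=> F0; apply: (@lipschitz_continuous_dist _ m.+1%:R) => // x x'.
have -> : 1 - cutoff F m x - (1 - cutoff F m x') = - (cutoff F m x - cutoff F m x').
  by ring.
by rewrite normrN; exact: cutoff_lipschitz.
Qed.

Lemma cutoff_on F m x : F x -> cutoff F m x = 1.
Proof. by move=> Fx; rewrite /cutoff setdist_eq0 // mulr0 ltr01 subr0. Qed.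

Lemma cutoff_off F x : closed F -> F !=set0 -> ~ F x ->
  \forall m \near \oo, cutoff F m x = 0.
Proof.
move=> cF F0 nFx; have dp := setdist_gt0 _ _ cF F0 nFx.
near=> m; rewrite /cutoff ifF //; apply/negbTE; rewrite -leNgt.
have : (setdist F x)^-1 < m%:R by near: m; apply: nbhs_infty_gtr.
move=> /ltW h; have := ler_wpM2r (ltW dp) h.
by rewrite mulVf // gt_eqF.
Unshelve. all: end_near.
Qed.

Lemma baire1_cst (c : Y) : baire1 (fun _ : X => c).
Proof. by exists (fun _ _ => c); split => // [n|x]; [exact: cst_continuous|exact: cvg_cst]. Qed.

(* The approximants [cutoff F m *: g1 m + (1 - cutoff F m) *: g2 m] are continuous and
   converge to [g1] on [F] and to [g2] off [F]. *)
Lemma baire1_glue (F : set X) (f1 f2 : X -> Y) : closed F ->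
  baire1 f1 -> baire1 f2 -> baire1 (fun x => if `[< F x >] then f1 x else f2 x).
Proof.
move=> cF [g1 [c1 l1]] [g2 [c2 l2]].
have [F0|nF0] := pselect (F !=set0); last first.
  suff -> : (fun x => if `[< F x >] then f1 x else f2 x) = f2 by exists g2.
  by apply/funext => x; rewrite asboolF // => Fx; apply: nF0; exists x.
exists (fun m x => cutoff F m x *: g1 m x + (1 - cutoff F m x) *: g2 m x); split.
  move=> m; apply: continuousD_tvs; apply: continuousZ_tvs.
  - exact: continuous_cutoff.
  - exact: c1.
  - exact: continuous_cutoffC.
  - exact: c2.
move=> x; have [Fx|nFx] := pselect (F x).
  rewrite asboolT //; apply: cvg_trans (l1 x); apply: near_eq_cvg; near=> m.
  by rewrite cutoff_on // scale1r subrr scale0r addr0.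
rewrite asboolF //; apply: cvg_trans (l2 x); apply: near_eq_cvg.
near=> m; have -> : cutoff F m x = 0 by near: m; exact: cutoff_off.
by rewrite scale0r add0r subr0 scale1r.
Unshelve. all: end_near.
Qed.

End Baire1Glue.

Lemma ex_least {P : nat -> Prop} :
  (exists i, P i) -> exists i0, P i0 /\ forall j, (j < i0)%N -> ~ P j.
Proof.
move=> [i Pi]; have hb : exists i, `[< P i >] by exists i; apply/asboolP.
case: (ex_minnP hb) => i0 /asboolP Pi0 hmin; exists i0; split => // j ji0 Pj.
by have := hmin j (asboolT Pj); rewrite leqNgt ji0.
Qed.

Section DecisionTrees.
Context {X : topologicalType}.

Inductive dtree (L : Type) := DLeaf of L | DNode of set X & dtree L & dtree L.
Arguments DLeaf {L} _.
Arguments DNode {L} _ _ _.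

Fixpoint dt_eval {L} (t : dtree L) x : L :=
  match t with
  | DLeaf l => l
  | DNode F t1 t2 => if `[< F x >] then dt_eval t1 x else dt_eval t2 x
  end.

Fixpoint dt_closed {L} (t : dtree L) : Prop :=
  match t with
  | DLeaf _ => True
  | DNode F t1 t2 => [/\ closed F, dt_closed t1 & dt_closed t2]
  end.

Fixpoint dt_graft {L L'} (t : dtree L) (g : L -> dtree L') : dtree L' :=
  match t with
  | DLeaf l => g l
  | DNode F t1 t2 => DNode F (dt_graft t1 g) (dt_graft t2 g)
  end.

Lemma dt_eval_graft L L' (t : dtree L) (g : L -> dtree L') x :
  dt_eval (dt_graft t g) x = dt_eval (g (dt_eval t x)) x.
Proof. by elim: t => [l|F t1 IH1 t2 IH2] //=; case: ifP. Qed.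

Lemma dt_closed_graft L L' (t : dtree L) (g : L -> dtree L') :
  dt_closed t -> (forall l, dt_closed (g l)) -> dt_closed (dt_graft t g).
Proof. by elim: t => [l|F t1 IH1 t2 IH2] //= [? ? ?] hg; split; auto. Qed.

Definition dt_first {L : Type} (G : L -> set X) (s : seq L) (def : L) : dtree L :=
  foldr (fun c acc => DNode (G c) (DLeaf c) acc) (DLeaf def) s.

Lemma dt_closed_first {L : eqType} (G : L -> set X) s def :
  (forall c, c \in s -> closed (G c)) -> dt_closed (dt_first G s def).
Proof.
elim: s => [|c s IH] //= hc; split => //.
  by apply: hc; rewrite inE eqxx.
by apply: IH => c' hc'; apply: hc; rewrite inE hc' orbT.
Qed.

Lemma dt_eval_first {L : eqType} (G : L -> set X) s def x :
  (exists2 c, c \in s & G c x) ->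
  exists2 c, c \in s & G c x /\ dt_eval (dt_first G s def) x = c.
Proof.
elim: s => [[c]|c s IH]; first by rewrite in_nil.
move=> hex /=; have [Gcx|nGcx] := pselect (G c x).
  by exists c; [rewrite inE eqxx|rewrite asboolT].
rewrite asboolF //.
have [c' c's [Gc' ->]] : exists2 c', c' \in s & G c' x /\ dt_eval (dt_first G s def) x = c'.
  by apply: IH; case: hex => c' /[!inE] /orP [/eqP ->//|c's Gc']; exists c'.
by exists c' => //; rewrite inE c's orbT.
Qed.

Lemma dt_eval_first_cases {L : eqType} (G : L -> set X) s def x :
  dt_eval (dt_first G s def) x = def \/ dt_eval (dt_first G s def) x \in s.
Proof.
elim: s => [|c s IH] /=; first by left.
case: ifP => _; first by right; rewrite inE eqxx.
by case: IH => [->|h]; [left|right; rewrite inE h orbT].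
Qed.

End DecisionTrees.

Arguments dtree : clear implicits.
Arguments DLeaf {X L} _.
Arguments DNode {X L} _ _ _.

Fixpoint cascade {X Y : Type} (C : nat -> set X) (s : nat -> X -> Y) (N : nat)
    (g : X -> Y) : X -> Y :=
  match N with
  | 0 => g
  | N'.+1 => fun x => if `[< C 0%N x >] then s 0%N x
                     else cascade (fun i => C i.+1) (fun i => s i.+1) N' g x
  end.

Lemma cascade_first {X Y : Type} {C s N} {g : X -> Y} {x i0} :
  (forall j, (j < i0)%N -> ~ C j x) -> C i0 x -> (i0 < N)%N -> cascade C s N g x = s i0 x.
Proof.
elim: N C s i0 => [|N IH] C s i0 hj hC //= hlt.
case: i0 hj hC hlt => [|i0] hj hC hlt; first by rewrite asboolT.
rewrite asboolF; last exact: hj.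
by apply: (@IH (fun i => C i.+1) (fun i => s i.+1) i0) => // j hji; apply: hj.
Qed.

Lemma cascade_none {X Y : Type} {C s N} {g : X -> Y} {x} :
  (forall j, (j < N)%N -> ~ C j x) -> cascade C s N g x = g x.
Proof.
elim: N C s => [|N IH] C s hj //=.
rewrite asboolF; last exact: hj.
by apply: IH => j hjN; apply: hj.
Qed.

Section Baire1Cascade.
Context {R : realType} {X : topologicalType} {Y : tvsType R} {dX : X -> X -> R}.
Hypotheses (hm : is_metric dX) (ht : induces_topology dX).

Lemma baire1_dt_eval {L : Type} (c : L -> Y) (t : dtree X L) : dt_closed t ->
  baire1 (fun x => c (dt_eval t x)).
Proof.
elim: t => [l _|F t1 IH1 t2 IH2 [cF c1 c2]] /=; first exact: baire1_cst.
have -> : (fun x => c (if `[< F x >] then dt_eval t1 x else dt_eval t2 x)) =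
          (fun x => if `[< F x >] then c (dt_eval t1 x) else c (dt_eval t2 x)).
  by apply/funext => x; case: ifP.
exact: baire1_glue hm ht _ _ _ cF (IH1 c1) (IH2 c2).
Qed.

Lemma baire1_cascade C s N (g : X -> Y) : (forall i, closed (C i)) ->
  (forall i, baire1 (s i)) -> baire1 g -> baire1 (cascade C s N g).
Proof.
elim: N C s => [|N IH] C s cC bs bg //=.
exact: baire1_glue hm ht _ _ _ (cC 0%N) (bs 0%N) (IH _ _ (fun i => cC i.+1) (fun i => bs i.+1) bg).
Qed.

End Baire1Cascade.

Section ProductSets.
Context {X Y : topologicalType}.

Lemma closed_proj_compact {C : set (X * Y)} {K : set Y} : closed C -> compact K ->
  closed [set x | exists2 y, K y & C (x, y)].
Proof.
move=> cC cK x clx.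
pose B W := [set y | K y /\ exists2 x', W x' & C (x', y)].
have FF : Filter (filter_from (nbhs x) B).
  apply: filter_from_filter; first by exists setT; exact: filterT.
  move=> W1 W2 h1 h2; exists (W1 `&` W2); first exact: filterI.
  by move=> y [Ky [x' [w1 w2] Cx']]; split; split => //; exists x'.
have PF : ProperFilter (filter_from (nbhs x) B).
  apply: filter_from_proper => W hW.
  have [x' [[y Ky Cy] Wx']] := clx W hW.
  by exists y; split => //; exists x'.
have FK : filter_from (nbhs x) B K by exists setT => //; [exact: filterT | move=> y []].
have [y [Ky cly]] := cK _ PF FK.
exists y => //; apply: cC => U /= [[A1 A2] /= [hA1 hA2] hA].
have [y' [[Ky' [x' Ax' Cx']] By']] := cly (B A1) A2 (ex_intro2 _ _ A1 hA1 (fun _ h => h)) hA2.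
by exists (x', y'); split => //; apply: hA.
Qed.

Lemma closed_section {C : set (X * Y)} x : closed C -> closed [set y | C (x, y)].
Proof.
move=> cC y cly; apply: cC => U [[A1 A2] /= [hA1 hA2] hA].
have [y' [Cy' Ay']] := cly A2 hA2.
exists (x, y'); split => //; apply: hA; split => //=; exact: nbhs_singleton.
Qed.

End ProductSets.

Definition invS (R : realType) (N : nat) : R := N.+1%:R^-1.

Lemma invS_gt0 (R : realType) N : 0 < invS R N.
Proof. by rewrite /invS invr_gt0 ltr0Sn. Qed.

Lemma invS_le (R : realType) {N M : nat} : (N <= M)%N -> invS R M <= invS R N.
Proof. by move=> h; rewrite /invS lef_pV2 ?posrE ?ltr0Sn ?ler_nat. Qed.

Lemma ex_invS_lt {R : realType} {e : R} : 0 < e -> exists N, invS R N < e.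
Proof.
move=> e0; have [N _ hN] := nbhs_infty_gtr e^-1.
exists N; rewrite /invS -(invrK e) ltf_pV2 ?posrE ?ltr0Sn ?invr_gt0 //.
by apply: lt_trans (hN N (leqnn N)) _; rewrite ltr_nat.
Qed.

Lemma near_invS_lt {R : realType} {e : R} : 0 < e -> \forall N \near \oo, invS R N < e.
Proof.
move=> e0; have [N hN] := ex_invS_lt e0; exists N => // M /= hM.
exact: le_lt_trans (invS_le R hM) hN.
Qed.

Section CompactSelection.
Context {R : realType} {X : topologicalType} {Y : tvsType R}.
Context {dX : X -> X -> R} {d : Y -> Y -> R}.
Hypotheses (hmX : is_metric dX) (htX : induces_topology dX).
Hypotheses (hmY : is_metric d) (htY : induces_topology d) (cY : metric_complete d).
Variables (T : set (X * Y)) (K : set Y).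
Hypotheses (cT : closed T) (cK : compact K).

Lemma finite_net {e : R} : 0 < e ->
  exists s : seq Y, forall y, K y -> exists2 c, c \in s & d c y < e.
Proof.
move=> e0; pose F := filter_from setT (fun s0 : seq Y => [set s : seq Y | all (mem s) s0]).
have FF : Filter F.
  apply: filter_from_filter; first by exists [::].
  move=> s1 s2 _ _; exists (s1 ++ s2) => // s /=; rewrite all_cat => /andP [h1 h2].
  by split.
have := cK; rewrite compact_near_coveringP.
move=> /(_ (seq Y) F (fun s y => exists2 c, c \in s & d c y < e) FF) [].
  move=> x Kx; exists ([set y | d x y < e], [set s : seq Y | all (mem s) [:: x]]).
    by split; [exact: nbhs_dball | exists [:: x]].
  by move=> [y s] /= [hy /andP [xs _]]; exists x.
by move=> s0 _ hs0; exists s0 => y Ky; apply: hs0 => //; exact/allP.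
Qed.

Definition net N : seq Y := projT1 (cid (finite_net (invS_gt0 R N))).

Lemma net_cover N y : K y -> exists2 c, c \in net N & d c y < invS R N.
Proof. exact: (projT2 (cid (finite_net (invS_gt0 R N)))) y. Qed.

Definition tracked (h : seq Y) : set X := [set x | exists y, [/\ K y, T (x, y) &
  forall k, (k < size h)%N -> d (nth 0 h k) y <= invS R k]].

Lemma closed_tracked h : closed (tracked h).
Proof.
pose K' := K `&` \bigcap_(k in [set k | (k < size h)%N]) [set y | d (nth 0 h k) y <= invS R k].
have cK' : compact K'.
  apply: compact_closedI => //; apply: closed_bigI => k _.
  exact: closed_dcball.
have -> : tracked h = [set x | exists2 y, K' y & T (x, y)].
  apply/seteqP; split => x /= [y].
    by move=> [Ky Txy hk]; exists y => //; split => // k /= hkk; apply: hk.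
  by move=> [Ky hk] Txy; exists y; split => // k hkk; apply: hk.
exact: closed_proj_compact.
Qed.

Fixpoint track_tree (N : nat) : dtree X (seq Y) :=
  match N with
  | 0 => DLeaf [::]
  | N'.+1 => dt_graft (track_tree N')
      (fun h => dt_first tracked [seq rcons h c | c <- net N'] (rcons h 0))
  end.

Definition track N x := dt_eval (track_tree N) x.

Lemma dt_closed_track_tree N : dt_closed (track_tree N).
Proof.
elim: N => [//|N IH] /=; apply: dt_closed_graft => // h.
by apply: dt_closed_first => c _; exact: closed_tracked.
Qed.

Lemma track_succ N x : exists c, track N.+1 x = rcons (track N x) c.
Proof.
rewrite /track /= dt_eval_graft.
case: (dt_eval_first_cases tracked [seq rcons (track N x) c | c <- net N] (rcons (track N x) 0) x)
  => [->|/mapP [c _ ->]]; by eexists.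
Qed.

Lemma size_track N x : size (track N x) = N.
Proof. by elim: N => [//|N IH]; have [c ->] := track_succ N x; rewrite size_rcons IH. Qed.

Lemma nth_track N M x k : (k < N)%N -> (N <= M)%N ->
  nth 0 (track M x) k = nth 0 (track N x) k.
Proof.
move=> kN; elim: M => [|M IH] hNM; first by move: hNM; rewrite leqn0 => /eqP ->.
move: hNM; rewrite leq_eqVlt => /orP [/eqP -> //|hNM].
have [c ->] := track_succ M x; rewrite nth_rcons size_track.
by rewrite (leq_trans kN hNM); exact: IH.
Qed.

Lemma tracked_track N x : tracked [::] x -> tracked (track N x) x.
Proof.
move=> hx; elim: N => [//|N [y [Ky Txy hk]]].
have hsz := size_track N x.
have [c cn dc] := net_cover N y Ky.
have hc : tracked (rcons (track N x) c) x.
  exists y; split => // k; rewrite size_rcons nth_rcons hsz ltnS leq_eqVlt.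
  move=> /orP [/eqP ->|kN]; last by rewrite kN; apply: hk; rewrite hsz.
  by rewrite ltnn eqxx; apply: ltW.
rewrite /track /= dt_eval_graft -/(track N x).
have [_ /mapP [c' _ ->] [hG ->]] := dt_eval_first tracked _ (rcons (track N x) 0) x
  (ex_intro2 _ _ (rcons (track N x) c) (map_f (fun c => rcons (track N x) c) cn) hc).
exact: hG.
Qed.

Definition selection N x := nth 0 (track N.+1 x) N.

Lemma baire1_selection N : baire1 (selection N).
Proof. by have := baire1_dt_eval hmX htX (nth 0 ^~ N) _ (dt_closed_track_tree N.+1). Qed.

(* Both entries are within [1/(N+1)] of the point witnessing [tracked (track M.+1 x) x]. *)
Lemma selection_cauchy x {N M} : tracked [::] x -> (N <= M)%N ->
  d (selection N x) (selection M x) <= invS R N + invS R N.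
Proof.
move=> hx hNM; rewrite /selection -(@nth_track N.+1 M.+1) //.
have [y [Ky Txy hk]] := tracked_track M.+1 x hx.
have := hk N; have := hk M; rewrite size_track => /(_ (ltnSn M)) h2.
move=> /(_ (leq_ltn_trans hNM (ltnSn M))) h1.
have := invS_le R hNM.
have := is_metric_triangle hmY (nth 0 (track M.+1 x) N) y (nth 0 (track M.+1 x) M).
rewrite (is_metric_sym hmY y); lra.
Qed.

Lemma selection_cvg x : (exists2 y, K y & T (x, y)) ->
  exists l : Y, selection N x @[N --> \oo] --> l /\ T (x, l).
Proof.
move=> [y0 Ky0 Txy0]; have hx : tracked [::] x by exists y0.
have [l hl] : exists l : Y, selection N x @[N --> \oo] --> l.
  apply: (cY (fun N => selection N x)) => e e0.
  have [N0 hN0] : exists N0, invS R N0 < e / 2 by apply: ex_invS_lt; lra.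
  exists N0 => m n hm hn.
  wlog hmn : m n hm hn / (m <= n)%N.
    move=> H; case: (leqP m n) => h; first exact: H.
    rewrite is_metric_sym //; apply: H => //; exact: ltnW.
  have := selection_cauchy x hx hmn; have := invS_le R hm; lra.
exists l; split => //; apply: (closed_dist_approx hmY htY (closed_section x cT)) => e e0.
have e2 : 0 < e / 2 by lra.
have [N [hN1 hN2]] := filter_ex (filterI ((cvg_distP hmY htY _ _).1 hl _ e2) (near_invS_lt e2)).
have [y [Ky Txy /(_ N)]] := tracked_track N.+1 x hx.
rewrite size_track => /(_ (ltnSn N)) hy; exists y => //.
have := is_metric_triangle hmY l (selection N x) y; rewrite /selection in hN1 *; lra.
Qed.

End CompactSelection.

Section SigmaCompactSelection.
Context {R : realType} {X : topologicalType} {Y : tvsType R}.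
Context {dX : X -> X -> R} {d : Y -> Y -> R}.
Hypotheses (hmX : is_metric dX) (htX : induces_topology dX).
Hypotheses (hmY : is_metric d) (htY : induces_topology d) (cY : metric_complete d).
Variables (T : set (X * Y)) (K : nat -> set Y).
Hypotheses (cT : closed T) (cK : forall n, compact (K n)) (cov : forall y, exists n, K n y).

(* On the closed set of [x] whose section meets [K n] for a least [n], use the [n]-th compact
   selection. *)
Lemma baire1_sigma_selection : exists s : nat -> X -> Y, (forall N, baire1 (s N)) /\
  forall x, (exists y, T (x, y)) -> exists l : Y, s N x @[N --> \oo] --> l /\ T (x, l).
Proof.
pose C n := [set x | exists2 y, K n y & T (x, y)].
pose sel n := selection hmY htY T _ (cK n).
exists (fun N => cascade C (fun n => sel n N) N.+1 (fun _ => 0)); split.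
  move=> N; apply: (baire1_cascade hmX htX).
  - by move=> n; exact: closed_proj_compact.
  - by move=> n; have := baire1_selection hmX htX hmY htY T _ cT (cK n) N.
  - exact: baire1_cst.
move=> x [y Txy]; have [n0 [Cn0 hmin]] : exists n0, C n0 x /\ forall j, (j < n0)%N -> ~ C j x.
  by apply: ex_least; have [n Kny] := cov y; exists n, y.
have [l [hl Tl]] := selection_cvg hmY htY cY T _ cT (cK n0) x Cn0.
exists l; split => //; apply: cvg_trans hl; apply: near_eq_cvg.
near=> N; rewrite (cascade_first hmin Cn0) //.
by rewrite ltnS; near: N; exact: nbhs_infty_ge.
Unshelve. all: end_near.
Qed.

End SigmaCompactSelection.

Definition ofst_set {X Y : Type} (o : option (X * Y)) : set X :=
  fun x => if o is Some p then p.1 = x else False.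

Definition osnd {X : Type} {R : realType} {Y : tvsType R} (o : option (X * Y)) : Y :=
  if o is Some p then p.2 else 0.

Lemma ofst_setP {X Y : Type} {o : option (X * Y)} {x} :
  ofst_set o x -> exists2 q, o = Some q & q.1 = x.
Proof. by case: o => [q|] //= h; exists q. Qed.

Section Gluing.
Context {R : realType} {X : topologicalType} {Y : tvsType R}.
Context {dX : X -> X -> R} {d : Y -> Y -> R}.
Hypotheses (hmX : is_metric dX) (htX : induces_topology dX).
Hypotheses (hmY : is_metric d) (htY : induces_topology d).
Variables (T : set (X * Y)) (s : nat -> X -> Y).
Hypotheses (cT : closed T) (baire1_s : forall N, baire1 (s N))
  (cvg_s : forall x, (exists y, T (x, y)) ->
     exists l : Y, s N x @[N --> \oo] --> l /\ T (x, l)).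
Variables (A E : nat -> option (X * Y)) (v : Y).
Hypotheses
  (A_near : forall {i p}, A i = Some p -> exists2 t, T t & dX t.1 p.1 < invS R i /\ t.2 = p.2)
  (A_inj : forall {i j p q}, A i = Some p -> A j = Some q -> p.1 = q.1 -> i = j)
  (A_dense : forall {x y}, T (x, y) -> forall e, 0 < e -> exists i p,
     [/\ A i = Some p, p.1 != x, dX x p.1 < e & d y p.2 < e])
  (E_val : forall {j p}, E j = Some p -> p.2 = j%:R *: v)
  (E_v0 : forall {j p}, E j = Some p -> v != 0)
  (E_cover : forall x, (forall y, ~ T (x, y)) -> exists j, ofst_set (E j) x).

Let sepXY : accessible_space (X * Y)%type :=
  accessible_prod (hausdorff_accessible (induced_hausdorff hmX htX))
                  (hausdorff_accessible (induced_hausdorff hmY htY)).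

Lemma closed_ofst_set (o : option (X * Y)) : closed (ofst_set o).
Proof.
case: o => [p|]; last exact: closed0.
have -> : ofst_set (Some p) = [set p.1] by apply/seteqP; split => x /=.
exact/accessible_closed_set1/hausdorff_accessible/(induced_hausdorff hmX htX).
Qed.

Definition stage N := cascade (ofst_set \o A) (fun i _ => osnd (A i)) N
  (cascade (ofst_set \o E) (fun j _ => osnd (E j)) N (s N)).

Lemma baire1_stage N : baire1 (stage N).
Proof.
apply: (baire1_cascade hmX htX); [by move=> i; exact: closed_ofst_set|
  by move=> i; exact: baire1_cst|].
apply: (baire1_cascade hmX htX); [by move=> i; exact: closed_ofst_set|
  by move=> i; exact: baire1_cst|exact: baire1_s].
Qed.

Lemma stage_anchor {x i0} : (forall j, (j < i0)%N -> ~ ofst_set (A j) x) ->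
  ofst_set (A i0) x -> \forall N \near \oo, stage N x = osnd (A i0).
Proof.
move=> hmin hi0; near=> N; rewrite /stage (cascade_first hmin hi0) //.
by near: N; exact: nbhs_infty_gt.
Unshelve. all: end_near.
Qed.

Lemma stage_escape {x j0} : (forall i, ~ ofst_set (A i) x) ->
  (forall j, (j < j0)%N -> ~ ofst_set (E j) x) -> ofst_set (E j0) x ->
  \forall N \near \oo, stage N x = osnd (E j0).
Proof.
move=> nA hmin hj0; near=> N; rewrite /stage cascade_none; last by move=> i _; exact: nA.
rewrite (cascade_first hmin hj0) //.
by near: N; exact: nbhs_infty_gt.
Unshelve. all: end_near.
Qed.

Lemma stage_selection x : (forall i, ~ ofst_set (A i) x) ->
  (forall j, ~ ofst_set (E j) x) -> forall N, stage N x = s N x.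
Proof.
move=> nA nE N; rewrite /stage cascade_none; last by move=> i _; exact: nA.
by rewrite cascade_none // => j _; exact: nE.
Qed.

Lemma stage_cases x : exists2 l : Y, stage N x @[N --> \oo] --> l &
  [\/ exists i, A i = Some (x, l), exists j, E j = Some (x, l) | T (x, l)].
Proof.
have [[i hi]|nA] := pselect (exists i, ofst_set (A i) x).
  have [i0 [hi0 hmin]] := @ex_least (fun i => ofst_set (A i) x) (ex_intro _ i hi).
  have [[a y] hq /= ax] := ofst_setP hi0; subst a.
  exists (osnd (A i0)); first by apply: cvg_near_cst; exact: stage_anchor.
  by apply: Or31; exists i0; rewrite hq.
have {}nA i : ~ ofst_set (A i) x by move=> h; apply: nA; exists i.
have [[j hj]|nE] := pselect (exists j, ofst_set (E j) x).
  have [j0 [hj0 hmin]] := @ex_least (fun j => ofst_set (E j) x) (ex_intro _ j hj).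
  have [[a y] hq /= ax] := ofst_setP hj0; subst a.
  exists (osnd (E j0)); first by apply: cvg_near_cst; exact: stage_escape.
  by apply: Or32; exists j0; rewrite hq.
have {}nE j : ~ ofst_set (E j) x by move=> h; apply: nE; exists j.
have [|l [hl Tl]] := cvg_s x.
  apply: contrapT => hn; have [j] := E_cover x (fun y Ty => hn (ex_intro _ y Ty)).
  exact: nE.
exists l; last exact: Or33.
by under eq_fun do rewrite stage_selection //.
Qed.

Definition glued x : Y := s2val (cid2 (stage_cases x)).

Lemma glued_cvg x : stage N x @[N --> \oo] --> glued x.
Proof. exact: s2valP (cid2 (stage_cases x)). Qed.

Lemma baire2_glued : baire2 glued.
Proof. by exists stage; split; [exact: baire1_stage | exact: glued_cvg]. Qed.

Lemma glued_cases x :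
  [\/ exists i, A i = Some (x, glued x), exists j, E j = Some (x, glued x) | T (x, glued x)].
Proof. exact: s2valP' (cid2 (stage_cases x)). Qed.

Lemma glued_anchor {i p} : A i = Some p -> glued p.1 = p.2.
Proof.
move=> hp; have hi : ofst_set (A i) p.1 by rewrite hp.
have [i0 [hi0 hmin]] := @ex_least (fun i => ofst_set (A i) p.1) (ex_intro _ i hi).
have [q hq hq1] := ofst_setP hi0.
have i0i := A_inj hq hp hq1; subst i0.
have hl : stage N p.1 @[N --> \oo] --> p.2.
  by apply: cvg_near_cst; rewrite -[p.2]/(osnd (Some p)) -hp; exact: stage_anchor.
exact: (@cvg_unique _ (induced_hausdorff hmY htY) _ _ _ _ (glued_cvg p.1) hl).
Qed.

Lemma graph_glued_sub : graph glued `<=`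
  [set q | exists i, A i = Some q] `|` ([set q | exists j, E j = Some q] `|` T).
Proof.
move=> [x y]; rewrite /graph /= => ->.
by case: (glued_cases x) => [[i hi]|[j hj]|hT]; [left; exists i|right; left; exists j|right; right].
Qed.

(* A limit point of the anchors is a limit of anchors of arbitrarily large index, and [A i] lies
   within [1/(i+1)] of [T]. *)
Lemma limit_point_anchors : limit_point [set q | exists i, A i = Some q] `<=` T.
Proof.
move=> p hp; apply: cT => U /prod_nbhsP [U1 [U2 [hU1 hU2 hU]]].
have [e e0 he] := (nbhs_dballP hmX htX _ _).1 hU1.
have e2 : 0 < e / 2 by lra.
have [M hM] := ex_invS_lt e2.
have hV : nbhs p ([set a | dX p.1 a < e / 2] `*` U2).
  by apply/prod_nbhsP; exists [set a | dX p.1 a < e / 2], U2; split => //; exact: nbhs_dball.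
have [q [qp [[i hi] qL] [hq1 hq2]]] := limit_point_setD_seq sepXY (pmap A (iota 0 M)) p hp _ hV.
have iM : (M <= i)%N.
  rewrite leqNgt; apply/negP => iM; move: qL; rewrite mem_pmap.
  by move/negP; apply; apply/mapP; exists i => //; rewrite mem_iota.
have [[a b] Tab [/= dt tq]] := A_near hi.
exists (a, b); split => //; apply: hU; last by rewrite /= tq.
apply: he => /=.
have := is_metric_triangle hmX p.1 q.1 a; have := invS_le R iM.
rewrite (is_metric_sym hmX q.1 a) /= in hq1 *; lra.
Qed.

(* Since [(1/j) *: (j *: v) = v] while [0 *: y = 0], continuity of scaling at [(0, y)] forbids
   escape points of large index near [p]. *)
Lemma limit_point_escapes p : ~ limit_point [set q | exists j, E j = Some q] p.
Proof.
move=> hp.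
have [z [_ [j0 hj0] _]] := hp setT filterT.
have v0 := E_v0 hj0.
have hW : nbhs (0 *: p.2 : Y) (~` [set v]).
  rewrite scale0r; apply: open_nbhs_nbhs; split; last by move=> /= h; rewrite h eqxx in v0.
  rewrite openC; exact/accessible_closed_set1/hausdorff_accessible/(induced_hausdorff hmY htY).
have /prod_nbhsP [U1 [U2 [hU1 hU2 hU]]] := @scale_continuous R Y ((0 : R^o), p.2) _ hW.
have [del del0 hdel] := (nbhs_ballP _ _).1 hU1.
have [M hM] := ex_invS_lt del0.
have hV : nbhs p (setT `*` U2) by apply/prod_nbhsP; exists setT, U2; split => //; exact: filterT.
have [q [qp [[j hj] qL] [_ hq2]]] := limit_point_setD_seq sepXY (pmap E (iota 0 M.+1)) p hp _ hV.
have jM : (M.+1 <= j)%N.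
  rewrite leqNgt; apply/negP => jM; move: qL; rewrite mem_pmap.
  by move/negP; apply; apply/mapP; exists j => //; rewrite mem_iota.
have jn0 : j%:R != 0 :> R by rewrite pnatr_eq0 -lt0n (leq_trans _ jM).
have hU1j : U1 ((j%:R)^-1 : R^o).
  apply: hdel; rewrite -ball_normE /ball_ /= sub0r normrN.
  rewrite ger0_norm ?invr_ge0 ?ler0n //; apply: le_lt_trans hM.
  by rewrite /invS lef_pV2 ?posrE ?ltr0n ?ler_nat // (leq_trans _ jM).
by apply: (hU _ _ hU1j hq2); rewrite /= (E_val hj) scalerA mulVf // scale1r.
Qed.

Lemma Lf_glued : Lf glued = T.
Proof.
apply/seteqP; split.
  move=> p /(limit_point_subset graph_glued_sub).
  case/limit_pointU => [/limit_point_anchors //|/limit_pointU [/limit_point_escapes //|hT]].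
  exact/cT/subset_limit_point.
move=> [x y] Txy U /prod_nbhsP [U1 [U2 [hU1 hU2 hU]]].
have [e1 e10 he1] := (nbhs_dballP hmX htX _ _).1 hU1.
have [e2 e20 he2] := (nbhs_dballP hmY htY _ _).1 hU2.
have e0 : 0 < Num.min e1 e2 by rewrite lt_min e10 e20.
have [i [[a b] [hi /= ax hxa hyb]]] := A_dense Txy _ e0.
move: hxa hyb; rewrite !lt_min => /andP [hxa _] /andP [_ hyb].
exists (a, b); split.
- by apply: contra_neq ax => -[].
- by rewrite /graph /= (glued_anchor hi).
- by apply: hU; [exact: he1 | exact: he2].
Qed.

End Gluing.

Section GraphLimitPoints.
Context {X Y : topologicalType}.

Lemma ex_Lf_compact (f : X -> Y) (K : set Y) (x : X) : compact K ->
  (forall W, nbhs x W -> exists x', [/\ W x', x' <> x & K (f x')]) ->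
  exists2 y, K y & Lf f (x, y).
Proof.
move=> cK hW.
pose B W := f @` [set x' | [/\ W x', x' <> x & K (f x')]].
have FF : Filter (filter_from (nbhs x) B).
  apply: filter_from_filter; first by exists setT; exact: filterT.
  move=> W1 W2 h1 h2; exists (W1 `&` W2); first exact: filterI.
  by move=> _ [x' [[w1 w2] nx Kx] <-]; split; exists x'.
have PF : ProperFilter (filter_from (nbhs x) B).
  apply: filter_from_proper => W hW'.
  by have [x' [Wx' nx Kx]] := hW W hW'; exists (f x'), x'.
have FK : filter_from (nbhs x) B K.
  by exists setT; [exact: filterT | move=> _ [x' [_ _ Kx] <-]].
have [y [Ky cly]] := cK _ PF FK.
exists y => // U /prod_nbhsP [U1 [U2 [hU1 hU2 hU]]].
have [_ [[x' [Ux' nx Kx] <-] Uy']] := cly (B U1) U2 (ex_intro2 _ _ U1 hU1 (fun _ h => h)) hU2.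
exists (x', f x'); split => //; last exact: hU.
by apply/eqP => -[].
Qed.

Lemma limit_point_setT (nX : no_isolated_points X) (x : X) : limit_point setT x.
Proof.
move=> W; rewrite nbhsE => -[V [oV Vx] VW]; apply: contrapT => hn; apply: (nX x).
suff -> : [set x] = V by [].
apply/seteqP; split => z /=; first by move=> ->.
move=> Vz; apply: contrapT => zx; apply: hn; exists z; split => //; last exact: VW.
exact/eqP.
Qed.

End GraphLimitPoints.

Lemma ex_dball_notin {R : realType} {X : topologicalType} {dX : X -> X -> R} :
  is_metric dX -> induces_topology dX -> no_isolated_points X ->
  forall (s : seq X) (c : X) (r : R), 0 < r -> exists z, dX c z < r /\ z \notin s.
Proof.
move=> hm ht nX s c r r0.
have sepX := hausdorff_accessible (induced_hausdorff hm ht).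
have [z [_ [_ zs] hz]] :=
  limit_point_setD_seq sepX s c (limit_point_setT nX c) _ (nbhs_dball hm ht c r r0).
by exists z.
Qed.

Lemma injective_unbounded {g : nat -> nat} : injective g -> forall N, exists k, (N <= g k)%N.
Proof.
move=> ig N; apply: contrapT => /forallNP H.
have hs : {subset map g (iota 0 N.+1) <= iota 0 N}.
  move=> z /mapP [k _ ->]; rewrite mem_iota add0n /=.
  by have := H k; rewrite leqNgt => /negP; rewrite negbK.
have := uniq_leq_size (s1 := map g (iota 0 N.+1)) _ hs.
rewrite (map_inj_uniq ig) iota_uniq => /(_ isT).
by rewrite size_map !size_iota ltnn.
Qed.

Fixpoint greedy {A : Type} (next : nat -> seq A -> A) (n : nat) : seq A :=
  if n is n'.+1 then rcons (greedy next n') (next n' (greedy next n')) else [::].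

Lemma greedyE {A : Type} (next : nat -> seq A -> A) n :
  greedy next n = [seq next i (greedy next i) | i <- iota 0 n].
Proof.
elim: n => [//|n IH].
rewrite [LHS]/= {1}IH -[n.+1]addn1 iotaD map_cat cats1.
by [].
Qed.

Section Construction.
Context {R : realType} {X : topologicalType} {Y : tvsType R}.
Context {dX : X -> X -> R} {d : Y -> Y -> R}.
Hypotheses (hmX : is_metric dX) (htX : induces_topology dX).
Hypotheses (hmY : is_metric d) (htY : induces_topology d) (cY : metric_complete d).
Hypothesis (nX : no_isolated_points X).
Variables (T : set (X * Y)) (K : nat -> set Y).
Hypotheses (cT : closed T) (cK : forall n, compact (K n)) (cov : forall y, exists n, K n y).
Variable (Q : set X).
Hypotheses (cQ : countable Q) (Q_dense : forall x e, 0 < e -> exists2 q, Q q & dX x q < e).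

(* Boxes around the points of [Q] times balls around the [c]-th point of the [m]-th net of [K n]
   form a countable base. Picking a point of [T] in each box, every box being repeated infinitely
   often, gives a sequence that visits every neighbourhood of every point of [T] at arbitrarily
   large indices. *)
Lemma ex_dense_seq {t0 : X * Y} : T t0 -> exists t : nat -> X * Y, (forall i, T (t i)) /\
  forall x y, T (x, y) -> forall e, 0 < e -> forall N, exists i,
    [/\ (N <= i)%N, dX x (t i).1 < e & d y (t i).2 < e].
Proof.
move=> Tt0; move: cQ => /countable_injP [gQ gQ_inj].
pose box (w : nat * nat * nat * nat) (p : X * Y) := let: (k, n, m, c) := w in
  exists2 q, Q q /\ gQ q = k & [/\ T p, dX q p.1 < invS R m &
                                   d (nth 0 (net hmY htY _ (cK n) m) c) p.2 < invS R m].
pose pick w := if pselect (exists p, box w p) is left h then projT1 (cid h) else t0.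
have pickT w : T (pick w).
  rewrite /pick; case: pselect => [h|//].
  by case: w h => [[[k n] m] c] h; case: (projT2 (cid h)) => q _ [].
have pickP w : (exists p, box w p) -> box w (pick w).
  by move=> h; rewrite /pick; case: pselect => [h'|//]; exact: (projT2 (cid h')).
exists (fun i => if @unpickle (nat * nat * nat * nat * nat)%type i is Some (w, _)
  then pick w else t0); split.
  by move=> i; case: (unpickle i) => [[w _]|].
move=> x y Txy e e0 N0.
have [m hm] : exists m, invS R m < e / 2 by apply: ex_invS_lt; lra.
have [n Kny] := cov y.
have [c cn dc] := net_cover hmY htY _ (cK n) m y Kny.
have [q Qq hq] := Q_dense x _ (invS_gt0 R m).
pose w := (gQ q, n, m, index c (net hmY htY _ (cK n) m)).
have [q' [Qq' gq'] [_ /= h1 h2]] : box w (pick w).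
  apply: pickP; exists (x, y), q => //; split => //=; first by rewrite is_metric_sym.
  by rewrite nth_index.
have q'q : q' = q by apply: gQ_inj; rewrite ?inE.
subst q'.
have inj_w : injective (fun r : nat => pickle (w, r)).
  by move=> r1 r2 /(pcan_inj pickleK) [].
have [r hr] := injective_unbounded inj_w N0.
exists (pickle (w, r)); rewrite pickleK; split => //.
  have := is_metric_triangle hmX x q (pick w).1; lra.
rewrite nth_index // in h2.
have := is_metric_triangle hmY y c (pick w).2; rewrite (is_metric_sym hmY y c); lra.
Qed.

(* The anchors are pairwise distinct points [a i] within [1/(i+1)] of the first coordinates of a
   dense sequence of [T]; distinctness is where the absence of isolated points is used. *)
Lemma ex_anchors : exists A : nat -> option (X * Y),
  [/\ forall i p, A i = Some p -> exists2 t, T t & dX t.1 p.1 < invS R i /\ t.2 = p.2,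
      forall i j p q, A i = Some p -> A j = Some q -> p.1 = q.1 -> i = j &
      forall x y, T (x, y) -> forall e, 0 < e -> exists i p,
        [/\ A i = Some p, p.1 != x, dX x p.1 < e & d y p.2 < e]].
Proof.
have [[t0 Tt0]|T0] := pselect (exists t0, T t0); last first.
  by exists (fun _ => None); split => // x y Txy; case: T0; exists (x, y).
have [t [tT tD]] := ex_dense_seq Tt0.
pose next i (s : seq X) := xget (t i).1 [set z | dX (t i).1 z < invS R i /\ z \notin s].
pose a i := next i (greedy next i).
have ha i : dX (t i).1 (a i) < invS R i /\ a i \notin greedy next i.
  apply: (@xgetPex _ (t i).1 [set z | dX (t i).1 z < invS R i /\ z \notin greedy next i]).
  exact: ex_dball_notin hmX htX nX _ _ _ (invS_gt0 R i).
have a_lt i j : (i < j)%N -> a i != a j.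
  move=> ij; apply/eqP => e; have [_] := ha j; rewrite greedyE -e.
  by move/negP; apply; apply/mapP; exists i => //; rewrite mem_iota.
have {}ha i := (ha i).1; clearbody a.
exists (fun i => Some (a i, (t i).2)); split.
- by move=> i p [<-]; exists (t i); [exact: tT | split; [exact: ha | by []]].
- move=> i j p q [<-] [<-] /= aij.
  by case: (ltngtP i j) => // ij; move: (a_lt _ _ ij); rewrite aij eqxx.
move=> x y Txy e e0.
have e2 : 0 < e / 2 by lra.
have [N hN] := ex_invS_lt e2.
have near_a k : (N <= k)%N -> dX x (t k).1 < e / 2 -> dX x (a k) < e.
  move=> kN hk; have := is_metric_triangle hmX x (t k).1 (a k); have := ha k.
  have := invS_le R kN; lra.
have [i [iN hi1 hi2]] := tD x y Txy _ e2 N.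
have [j [ji hj1 hj2]] := tD x y Txy _ e2 i.+1.
have jN : (N <= j)%N by apply: leq_trans (leq_trans iN (leqnSn i)) ji.
have [ax|ax] := eqVneq (a i) x.
  exists j, (a j, (t j).2); split => //.
  - by rewrite -ax eq_sym; exact: a_lt.
  - exact: near_a.
  - by rewrite /=; lra.
exists i, (a i, (t i).2); split => //.
- exact: near_a.
- by rewrite /=; lra.
Qed.

Lemma ex_escapes {D : set X} {v : Y} : countable D ->
  (forall x, ~ D x -> exists y, T (x, y)) -> (D !=set0 -> v != 0) ->
  exists E : nat -> option (X * Y),
  [/\ forall j p, E j = Some p -> p.2 = j%:R *: v,
      forall j p, E j = Some p -> v != 0 &
      forall x, (forall y, ~ T (x, y)) -> exists j, ofst_set (E j) x].
Proof.
move=> /countable_injP [g ig] hD hv.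
exists (fun j => if pselect (exists x, D x /\ g x = j) is left h
                 then Some (projT1 (cid h), j%:R *: v) else None); split.
- by move=> j p; case: pselect => // h [<-].
- by move=> j p; case: pselect => // -[x [Dx _]] _; apply: hv; exists x.
move=> x hx; have Dx : D x.
  by apply: contrapT => nD; have [y Ty] := hD x nD; exact: (hx y).
exists (g x); case: pselect => [h|]; last by move=> []; exists x.
rewrite /ofst_set /=; have [Dx' gx'] := projT2 (cid h).
by apply: ig; rewrite ?inE.
Qed.

Lemma ex_baire2_Lf (D : set X) (v : Y) : countable D ->
  (forall x, ~ D x -> exists y, T (x, y)) -> (D !=set0 -> v != 0) ->
  exists f : X -> Y, baire2 f /\ Lf f = T.
Proof.
move=> cD hD hv.
have [s [baire1_s cvg_s]] := baire1_sigma_selection hmX htX hmY htY cY _ _ cT cK cov.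
have [E [E_val E_v0 E_cover]] := ex_escapes cD hD hv.
have [A [A_near A_inj A_dense]] := ex_anchors.
exists (glued T s cvg_s A E E_cover); split.
  exact: baire2_glued hmX htX T s baire1_s cvg_s A E E_cover.
exact: Lf_glued hmX htX hmY htY T s cT cvg_s A E v A_near A_inj A_dense E_val E_v0 E_cover.
Qed.

End Construction.

Lemma Lf_sections_compact {X Y : topologicalType} (f : X -> Y) :
  no_isolated_points X -> compact [set: Y] -> forall x, exists y, Lf f (x, y).
Proof.
move=> nX cY x.
have [|y _ hy] := ex_Lf_compact f _ x cY; last by exists y.
move=> W hW; have [z [zx _ Wz]] := limit_point_setT nX x W hW.
by exists z; split => //; exact/eqP.
Qed.

Section CountableEmptySections.
Context {R : realType} {X Y : topologicalType} {dX : X -> X -> R}.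
Hypotheses (hmX : is_metric dX) (htX : induces_topology dX).
Variable (Q : set X).
Hypotheses (cQ : countable Q) (Q_dense : forall x e, 0 < e -> exists2 q, Q q & dX x q < e).
Variable (K : nat -> set Y).
Hypotheses (cK : forall n, compact (K n)) (cov : forall y, exists n, K n y).

(* In [E n], the points with empty section and value in [K n], each point has a punctured ball on
   which [f] avoids [K n]; so [E n] is a discrete subset of a separable space. *)
Lemma countable_Lf_empty_sections (f : X -> Y) :
  countable [set x | ~ exists y, Lf f (x, y)].
Proof.
pose D := [set x | ~ exists y, Lf f (x, y)].
pose E n := [set x | D x /\ K n (f x)].
have DE : D `<=` \bigcup_(n in setT) E n by move=> x Dx; have [n Kn] := cov (f x); exists n.
apply: sub_countable (subset_card_le DE) _; apply: bigcup_countable => // n _.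
have isolated x : E n x -> exists2 r, 0 < r &
    forall x', dX x x' < r -> x' <> x -> ~ K n (f x').
  move=> [Dx Kx]; apply: contrapT => hn; apply: Dx.
  have [y _ hy] : exists2 y, K n y & Lf f (x, y).
    apply: (ex_Lf_compact f (K n) x (cK n)) => W /(nbhs_dballP hmX htX) [r r0 hW].
    apply: contrapT => hn'; apply: hn; exists r => // x' hx' nx Kx'.
    by apply: hn'; exists x'; split => //; apply: hW.
  by exists y.
have /choice [qm hqm] : forall x, exists qm : X * nat, E n x ->
    [/\ Q qm.1, dX x qm.1 < invS R qm.2 &
        forall x', E n x' -> dX x x' < invS R qm.2 + invS R qm.2 -> x' = x].
  move=> x; have [Ex|nEx] := pselect (E n x); last by exists (x, 0%N).
  have [r r0 hr] := isolated x Ex.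
  have [m hm] : exists m, invS R m < r / 2 by apply: ex_invS_lt; lra.
  have [q Qq hq] := Q_dense x _ (invS_gt0 R m).
  exists (q, m) => _; split => // x' [_ Kx'] hx'.
  by apply: contrapT => nx; apply: (hr x') => //; lra.
move: cQ => /countable_injP [gQ gQ_inj].
apply/countable_injP; exists (fun x => pickle (gQ (qm x).1, (qm x).2)).
move=> x x'; rewrite !inE => Ex Ex' /(pcan_inj pickleK) [gq em].
have [Qx hx _] := hqm x Ex; have [Qx' hx' hx'_uniq] := hqm x' Ex'.
have qq : (qm x).1 = (qm x').1 by apply: gQ_inj; rewrite ?inE.
rewrite -qq -em in hx' hx'_uniq; apply: hx'_uniq => //.
have := is_metric_triangle hmX x' (qm x).1 x; rewrite (is_metric_sym hmX (qm x).1 x); lra.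
Qed.

End CountableEmptySections.

Lemma suslin_separable {R : realType} {X : topologicalType} :
  suslin R X -> exists Q : set X, countable Q /\ dense Q.
Proof.
case=> _ [P [g [[[DP [cDP dDP]] _] cg sg]]].
exists (g @` DP); split; first exact: card_le_trans (card_image_le g DP) cDP.
move=> O [x Ox] oO.
have [p _ gpx] : (g @` setT) x by rewrite sg.
have [|p' [Op' DPp']] := dDP (g @^-1` O) _ ((continuousP g).1 cg O oO).
  by exists p; rewrite /= gpx.
by exists (g p'); split => //; exists p'.
Qed.

Lemma ex_neq0_noncompact {R : realType} {Y : tvsType R} :
  ~ compact [set: Y] -> exists v : Y, v != 0.
Proof.
move=> ncY; apply: contrapT => h; apply: ncY.
suff -> : [set: Y] = [set 0] by exact: compact_set1.
apply/seteqP; split => y //= _; apply: contrapT => y0; apply: h; exists y.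
exact/eqP.
Qed.

Theorem theorem1p9 (R : realType) (X : topologicalType) (Y : tvsType R)
  (hXsc : sigma_compact X) (hXm : metrizable R X) (hXs : suslin R X)
  (hXi : no_isolated_points X) (hY : frechet Y) (T : set (X * Y)) :
  (compact [set: Y] ->
     ((exists f : X -> Y, baire2 f /\ Lf f = T) <->
      (closed T /\ forall x : X, exists y : Y, T (x, y)))) /\
  (sigma_compact Y -> ~ compact [set: Y] ->
     ((exists f : X -> Y, baire2 f /\ Lf f = T) <->
      (closed T /\ exists D : set X,
         countable D /\ forall x : X, ~ D x -> exists y : Y, T (x, y)))).
Proof.
case: hXm => dX [hmX htX]; case: hY => d [hmY htY cY _].
have [Q [cQ /(dense_dball hmX htX) Q_dense]] := suslin_separable hXs.
have sepXY : accessible_space (X * Y)%type :=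
  accessible_prod (hausdorff_accessible (induced_hausdorff hmX htX))
                  (hausdorff_accessible (induced_hausdorff hmY htY)).
have closed_Lf (f : X -> Y) : closed (Lf f) := closed_limit_point sepXY _.
split=> [cY1|[K [cK cupK]] ncY].
  split=> [[f [_ <-]]|[cT hT]]; first by split; [exact: closed_Lf | exact: Lf_sections_compact].
  apply: (ex_baire2_Lf hmX htX hmY htY cY hXi T (fun _ => setT) cT (fun _ => cY1)
    (fun y => ex_intro _ 0%N I) Q cQ Q_dense set0 0).
  - exact: countable0.
  - by move=> x _; exact: hT.
  - by move=> [x []].
have cov y : exists n, K n y by have : [set: Y] y by []; rewrite -cupK => -[n _ Kny]; exists n.
split=> [[f [_ <-]]|[cT [D [cD hD]]]].
  split; first exact: closed_Lf.
  exists [set x | ~ exists y, Lf f (x, y)]; split; last by move=> x /contrapT.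
  exact: countable_Lf_empty_sections hmX htX Q cQ Q_dense K cK cov f.
have [v v0] := ex_neq0_noncompact ncY.
exact: ex_baire2_Lf hmX htX hmY htY cY hXi T K cT cK cov Q cQ Q_dense D v cD hD (fun _ => v0).
Qed.
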